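(* Let $n\ge 2$, let $\Lambda$ be a positive integer, and let $V_\Lambda$ be the symmetric irreducible representation of $gl(n)$ (equivalently of $sl(n)$) whose highest weight corresponds to the Young tableau with row lengths $l_1=\Lambda$, $l_2=\dots=l_n=0$. Let $\widehat e^{\pm}_i$ ($i=1,\dots,n-1$) and $N_1,\dots,N_n$ be the crystal-basis generators of $gl(n)_{q\to 0}$ acting on $V_\Lambda$, as described in the context. Define, for $i=1,\dots,n-1$, $$E^{+}_{i}=\widehat e^{+}_{i}\,\sqrt{(N_i+1)\,N_{i+1}},\qquad E^{-}_{i}=\sqrt{(N_i+1)\,N_{i+1}}\;\widehat e^{-}_{i},\qquad H_i=N_i-N_{i+1}.$$ Then, as operators on $V_\Lambda$, these satisfy the defining relations of $sl(n)$ in the Cartan–Chevalley basis: $[H_i,E^{\pm}_j]=\pm a_{ji}E^{\pm}_j$, $[E^+_i,E^-_j]=\delta_{ij}H_i$, $[H_i,H_j]=0$, and the Serre relations $$\sum_{0\le m\le 1-a_{ij}}(-1)^m\binom{1-a_{ij}}{m}(E^{\pm}_i)^{1-a_{ij}-m}E^{\pm}_j(E^{\pm}_i)^m=0\quad(i\neq j),$$ where $(a_{ij})$ is the Cartan matrix of $sl(n)$, $a_{ii}=2$, $a_{ij}=-(\delta_{i-1,j}+\delta_{i,j-1})$ for $i\ne j$.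
   Context: For $q$ not a root of unity, $gl(n)_q$ is generated by $e^{\pm}_k$ ($k=1,\dots,n-1$) and $N_1,\dots,N_n$ with $[e^+_k,e^-_j]=\delta_{kj}[N_k-N_{k+1}]_q$, $[N_i,N_k]=0$, $[N_i,e^{\pm}_j]=\pm(\delta_{i,j}-\delta_{i-1,j})e^{\pm}_j$ and the $q$-Serre relations, where $[x]_q=(q^x-q^{-x})/(q-q^{-1})$. By Kashiwara's theory of crystal bases, in the limit $q\to 0$ there are operators $\widehat e^{\pm}_i$ (the crystal-basis generators) and a basis $\{\psi(\vec\Lambda;\vec\lambda)\}$ of each highest-weight irreducible representation with highest weight $\vec\Lambda$ such that: $h_i=N_i-N_{i+1}$ acts diagonally, $h_i\psi(\vec\Lambda;\vec\lambda)=\lambda_i\psi(\vec\Lambda;\vec\lambda)$; $\widehat e^{\pm}_i\psi(\vec\Lambda;\vec\lambda)=\psi(\vec\Lambda;\vec\lambda\pm\vec a_i)$ with $(\vec\lambda\pm\vec a_i)_j=\lambda_j\pm a_{ij}$, except that $\widehat e^+_i$ annihilates the states $\psi(\vec\Lambda;\vec\Lambda_i)$ at the top of the $i$-string and $\widehat e^-_i$ annihilates the states $\psi(\vec\Lambda;-\vec\Lambda_i)$ at the bottom of the $i$-string; consequently $\widehat e^+_i\widehat e^-_i$ (resp. $\widehat e^-_i\widehat e^+_i$) acts as the identity on all basis states not annihilated by $\widehat e^-_i$ (resp. $\widehat e^+_i$). Each basis state corresponds to a Young tableau with row lengths $l_1,\dots,l_n$ and is an eigenvector of $N_i$ with eigenvalue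 $l_i$, and $[N_i,\widehat e^{\pm}_k]=\pm(\delta_{i,k}-\delta_{i-1,k})\widehat e^{\pm}_k$. Square roots of functions of the commuting diagonal operators $N_i$ are taken on eigenvalues. *)

From HB Require Import structures.
From mathcomp Require Import all_boot all_order all_algebra.
Set Implicit Arguments. Unset Strict Implicit. Unset Printing Implicit Defensive.
Import Order.TTheory GRing.Theory Num.Theory.
Local Open Scope ring_scope.

(* Basis states of V_Lambda: one-row semistandard tableaux of length Lambda
   with entries in {1..n}, encoded by their contents m_1,...,m_n (m_k = number
   of boxes filled with k), i.e. the weights (l_1,...,l_n) = (m_1,...,m_n),
   with sum_k m_k = Lambda.  Each weight occurs exactly once. *)
Definition state (n Lam : nat) :=
  {m : {ffun 'I_n -> 'I_Lam.+1} | (\sum_(k < n) (m k : nat) == Lam)%N}.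
HB.instance Definition _ (n Lam : nat) := Finite.on (state n Lam).

Definition occ (n Lam : nat) (m : state n Lam) (k : 'I_n) : nat := val (val m k).

(* indices i = 1..n-1 are encoded 0-based by i : 'I_n.-1;
   ilo i is the (0-based) index i, ihi i is i+1, both in 'I_n *)
Lemma succ_lt_pred (n : nat) (i : 'I_n.-1) : (i.+1 < n)%N.
Proof. by case: i => i /=; case: n => [|n] //=. Qed.

Definition ilo (n : nat) (i : 'I_n.-1) : 'I_n := widen_ord (leq_pred n) i.
Definition ihi (n : nat) (i : 'I_n.-1) : 'I_n := Ordinal (succ_lt_pred i).

(* Operators on V_Lambda as matrices in the basis psi(m):
   entry (m', m) is the coefficient of psi(m') in A psi(m). *)
Definition opmx (R : nzRingType) (n Lam : nat)
    (f : state n Lam -> state n Lam -> R) : 'M[R]_#|{: state n Lam}| :=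
  \matrix_(a, b) f (enum_val a) (enum_val b).

Definition Nop (R : nzRingType) (n Lam : nat) (k : 'I_n) : 'M[R]_#|{: state n Lam}| :=
  opmx (fun m' m => if m' == m then (occ m k)%:R else 0).

Definition ehatp (R : nzRingType) (n Lam : nat) (i : 'I_n.-1) : 'M[R]_#|{: state n Lam}| :=
  opmx (fun m' m =>
    if (0 < occ m (ihi i))%N &&
       [forall k, occ m' k == (occ m k + (k == ilo i) - (k == ihi i))%N]
    then 1 else 0).

Definition ehatm (R : nzRingType) (n Lam : nat) (i : 'I_n.-1) : 'M[R]_#|{: state n Lam}| :=
  opmx (fun m' m =>
    if (0 < occ m (ilo i))%N &&
       [forall k, occ m' k == (occ m k - (k == ilo i) + (k == ihi i))%N]
    then 1 else 0).

Definition sqrtop (R : rcfType) (n Lam : nat) (i : 'I_n.-1) : 'M[R]_#|{: state n Lam}| :=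
  opmx (fun m' m => if m' == m
    then Num.sqrt (((occ m (ilo i)).+1 * occ m (ihi i))%N%:R) else 0).

Definition Eplus (R : rcfType) (n Lam : nat) (i : 'I_n.-1) : 'M[R]_#|{: state n Lam}| :=
  ehatp R Lam i *m sqrtop R Lam i.
Definition Eminus (R : rcfType) (n Lam : nat) (i : 'I_n.-1) : 'M[R]_#|{: state n Lam}| :=
  sqrtop R Lam i *m ehatm R Lam i.
Definition Hop (R : nzRingType) (n Lam : nat) (i : 'I_n.-1) : 'M[R]_#|{: state n Lam}| :=
  Nop R Lam (ilo i) - Nop R Lam (ihi i).

Definition comm (R : nzRingType) (k : nat) (A B : 'M[R]_k) : 'M[R]_k :=
  A *m B - B *m A.

Definition cartan (n : nat) (i j : 'I_n.-1) : int :=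
  if i == j then 2%R
  else if ((i : nat) == j.+1) || ((j : nat) == i.+1) then (-1)%R else 0%R.

Definition serre (R : nzRingType) (k : nat) (p : nat) (Xi Xj : 'M[R]_k) : 'M[R]_k :=
  \sum_(m < p.+1) ((-1) ^+ m * ('C(p, m))%:R) *: (Xi ^+ (p - m) *m Xj *m Xi ^+ m).

From mathcomp Require Import reals.
From HB Require Import structures.
From mathcomp Require Import all_boot all_order all_algebra.
From mathcomp Require Import ring zify.
Import Order.TTheory GRing.Theory Num.Theory.
Set Implicit Arguments. Unset Strict Implicit. Unset Printing Implicit Defensive.
Local Open Scope ring_scope.

(* The operators form the Jordan-Schwinger (oscillator) realisation of gl(n)
   on V_Lam = Sym^Lam(C^n).  In the basis psi(m) = x^m / sqrt(m!) of the
   homogeneous polynomials of degree Lam, N_k acts as x_k d/dx_k, E^+_i as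
   x_i d/dx_(i+1) and E^-_i as x_(i+1) d/dx_i.  Conjugating by the diagonal
   matrix sqrt(m!) turns each x_a d/dx_b into the polarisation operator on
   plain monomials, x^m |-> m_b x^(m + e_a - e_b), whose commutation relations
   [E_ab, E_cd] = delta_bc E_ad - delta_da E_cb are a polynomial identity in m.
   Everything follows from them: H_i = E_ii - E_(i+1)(i+1) gives the Cartan
   relations, and the Serre relations reduce to [E_ab, [E_ab, E_cd]] = 0 for
   adjacent simple roots and to [E_ab, E_cd] = 0 for the others. *)

Lemma subrACA (V : zmodType) (a b c d : V) : (a - b) - (c - d) = (a - c) - (b - d).
Proof. by rewrite !opprB addrACA [RHS]addrACA [- c + _]addrC. Qed.

Section Commutator.
Variables (R : comNzRingType) (k : nat).
Implicit Types A B P Q X Y : 'M[R]_k.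

Lemma commE A B : comm A B = A * B - B * A.
Proof. by rewrite /comm !mulmxE. Qed.

Lemma commBl A B X : comm (A - B) X = comm A X - comm B X.
Proof. by rewrite !commE mulrBl mulrBr subrACA. Qed.

Lemma commBr X A B : comm X (A - B) = comm X A - comm X B.
Proof. by rewrite !commE mulrBl mulrBr subrACA. Qed.

Lemma commNr X A : comm X (- A) = - comm X A.
Proof. by rewrite !commE mulrN mulNr opprB opprK addrC. Qed.

Lemma comm_conj P Q A B : Q * P = 1 -> comm (P * A * Q) (P * B * Q) = P * comm A B * Q.
Proof.
by move=> QP; rewrite !commE mulrBr mulrBl -!mulrA !(mulrA Q P) QP !mul1r.
Qed.

Lemma serre1 X Y : serre 1 X Y = comm X Y.
Proof.
rewrite /serre !big_ord_recr big_ord0 /= add0r commE !mulmxE subn0 subnn bin0 binn.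
by rewrite !expr0 !expr1 !mulr1 !mul1r scaleN1r scale1r.
Qed.

Lemma serre2 X Y : serre 2 X Y = comm X (comm X Y).
Proof.
rewrite /serre !big_ord_recr big_ord0 /= add0r !commE !mulmxE.
rewrite subn0 subSnn subnn bin0 bin1 binn expr0 expr1 !expr2 mulrNN !mulr1 !mul1r.
rewrite mulN1r scaleNr scaler_nat mulr2n !scale1r mulrBr mulrBl !mulrA.
by rewrite opprD opprB !addrA addrAC.
Qed.

End Commutator.

Section Indices.
Variable n : nat.
Implicit Types i j : 'I_n.-1.

Lemma lo_neq_hi i : ilo i != ihi i.
Proof. by rewrite -(inj_eq val_inj) /= ltn_eqF. Qed.

Lemma eq_ilo i j : (ilo i == ilo j) = (i == j).
Proof. by []. Qed.

Lemma eq_ihi i j : (ihi i == ihi j) = (i == j).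
Proof. by []. Qed.

Lemma adjacent_nand i j : ~~ ((ihi i == ilo j) && (ilo i == ihi j)).
Proof. by rewrite -!(inj_eq val_inj) /=; apply/negP => /andP[/eqP ? /eqP ?]; lia. Qed.

Lemma cartanE i j :
  cartan j i = ((ilo i == ilo j)%:Z - (ilo i == ihi j)%:Z)
             - ((ihi i == ilo j)%:Z - (ihi i == ihi j)%:Z).
Proof.
rewrite /cartan -!(inj_eq val_inj) /= eqSS ![(j : nat) == _]eq_sym.
by case: (eqVneq (i : nat) j) => [->|?]; case: (eqVneq i.+1 j) => ?;
  case: (eqVneq (i : nat) j.+1) => ? /=; lia.
Qed.

Lemma intr_cartan (R : pzRingType) i j :
  (cartan j i)%:~R = ((ilo i == ilo j)%:R - (ilo i == ihi j)%:R)
                   - ((ihi i == ilo j)%:R - (ihi i == ihi j)%:R) :> R.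
Proof. by rewrite cartanE !(intrD, intrN) -!pmulrn. Qed.

Lemma abs_cartan i j : i != j ->
  `|1 - cartan i j|%N = ((ihi i == ilo j) + (ilo i == ihi j)).+1.
Proof.
rewrite /cartan -!(inj_eq val_inj) /= => /negPf ->.
by case: (eqVneq i.+1 j) => ?; case: (eqVneq (i : nat) j.+1) => ? /=; lia.
Qed.

End Indices.

Section WeightedShifts.
Variables (R : rcfType) (n Lam : nat).
Local Notation state := (state n Lam).
Local Notation vec := {ffun 'I_n -> int}.
Local Notation mx := 'M[R]_#|{: state}|.
Implicit Types (m : state) (x v : vec) (a b c d k : 'I_n) (f : vec -> R).

Definition weight m : vec := [ffun k => (occ m k)%:Z].

Definition wshift v f : mx :=
  opmx (fun m' m => if weight m' == weight m + v then f (weight m) else 0).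

Definition shiftable v f :=
  forall m, f (weight m) != 0 -> exists m', weight m' = weight m + v.

Lemma weight_inj : injective weight.
Proof.
move=> m1 m2 h; apply/val_inj/ffunP => k; apply/val_inj.
by have := congr1 (fun x : vec => x k) h; rewrite !ffunE => -[].
Qed.

Lemma sum_occ m : (\sum_k occ m k)%N = Lam.
Proof. exact: eqP (valP m). Qed.

Lemma mulmx_opmx (f g : state -> state -> R) :
  opmx f *m opmx g = opmx (fun m' m => \sum_s f m' s * g s m).
Proof.
apply/matrixP => p q; rewrite !mxE (big_enum_val (fun s => f _ s * g s _)).
by apply: eq_bigr => j _; rewrite !mxE.
Qed.

Lemma mulmx_wshift v1 v2 f1 f2 : shiftable v2 f2 ->
  wshift v1 f1 *m wshift v2 f2 = wshift (v2 + v1) (fun x => f1 (x + v2) * f2 x).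
Proof.
move=> sh2; rewrite mulmx_opmx; apply/matrixP => p q; rewrite !mxE.
set m' := enum_val p; set m := enum_val q.
have [c0|/sh2[s0 s0E]] := eqVneq (f2 (weight m)) 0.
  by rewrite c0 mulr0 if_same big1 // => s _; rewrite if_same mulr0.
rewrite (bigD1 s0) //= big1 => [|s ns0]; last first.
  case: (weight s =P weight m + v2) => [sE|_]; last by rewrite mulr0.
  by case/eqP: ns0; apply: weight_inj; rewrite sE s0E.
by rewrite s0E eqxx addr0 -addrA; case: ifP; rewrite ?mul0r.
Qed.

Lemma eq_wshift v f1 f2 : (forall m, f1 (weight m) = f2 (weight m)) ->
  wshift v f1 = wshift v f2.
Proof. by move=> f12; apply/matrixP => p q; rewrite !mxE f12. Qed.

Lemma wshiftB v f1 f2 : wshift v f1 - wshift v f2 = wshift v (fun x => f1 x - f2 x).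
Proof. by apply/matrixP => p q; rewrite !mxE; case: ifP; rewrite ?subr0. Qed.

Lemma scale_wshift (b : bool) v v' f : (b -> v' = v) ->
  b%:R *: wshift v' f = wshift v (fun x => b%:R * f x).
Proof.
case: b => [/(_ isT) -> | _]; first by rewrite scale1r; apply: eq_wshift => m; rewrite mul1r.
by rewrite scale0r; apply/matrixP => p q; rewrite !mxE mul0r if_same.
Qed.

Lemma wshift0_diag f :
  wshift 0 f = opmx (fun m' m => if m' == m then f (weight m) else 0).
Proof. by apply/matrixP => p q; rewrite !mxE addr0 (inj_eq weight_inj). Qed.

Lemma wshift0_1 : wshift 0 (fun _ => 1) = 1%:M.
Proof.
by apply/matrixP => p q; rewrite wshift0_diag !mxE (inj_eq enum_val_inj); case: eqP.
Qed.

Lemma shiftable0 f : shiftable 0 f.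
Proof. by move=> m _; exists m; rewrite addr0. Qed.

Definition evec k : vec := [ffun j => (j == k)%:Z].
Definition wroot a b : vec := evec a - evec b.

Lemma wrootE a b x k : (x + wroot a b) k = x k + (k == a)%:Z - (k == b)%:Z.
Proof. by rewrite !ffunE addrA. Qed.

Lemma occ_shift m m' a b k : weight m' = weight m + wroot a b ->
  (occ m' k)%:Z = (occ m k)%:Z + (k == a)%:Z - (k == b)%:Z.
Proof. by move/(congr1 (fun x : vec => x k)); rewrite wrootE !ffunE. Qed.

Lemma natz_occ_shift m a b k : (0 < occ m b)%N ->
  (occ m k + (k == a) - (k == b))%N%:Z = (occ m k)%:Z + (k == a)%:Z - (k == b)%:Z.
Proof. by case: (eqVneq k b) => [->|_]; case: (_ == a) => /=; lia. Qed.

Lemma occ_shift_subDn m a b k : (0 < occ m b)%N ->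
  (occ m k - (k == b) + (k == a) = occ m k + (k == a) - (k == b))%N.
Proof. by case: (eqVneq k b) => [->|_]; case: (_ == a) => /=; lia. Qed.

Lemma sum_evec a : \sum_k evec a k = 1.
Proof.
rewrite (bigD1 a) //= big1 => [|k /negPf nka]; first by rewrite ffunE eqxx addr0.
by rewrite ffunE nka.
Qed.

Lemma shift_exists m a b : (0 < occ m b)%N -> exists m', weight m' = weight m + wroot a b.
Proof.
move=> mb; pose g k := (occ m k + (k == a) - (k == b))%N.
have gE k : (g k)%:Z = (weight m + wroot a b) k.
  by rewrite wrootE ffunE (@natz_occ_shift m a b k mb).
have sum_g : (\sum_k g k)%N = Lam.
  apply/eqP; rewrite -(eqr_nat int) natr_sum.
  rewrite (eq_bigr (fun k => (occ m k)%:R + evec a k - evec b k)) => [|k _]; last first.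
    by rewrite !natz gE wrootE !ffunE.
  by rewrite sumrB big_split /= !sum_evec addrK -natr_sum sum_occ.
have g_le k : (g k < Lam.+1)%N by rewrite ltnS -sum_g (bigD1 k) //= leq_addr.
pose f : {ffun 'I_n -> 'I_Lam.+1} := [ffun k => Ordinal (g_le k)].
have f_sum : (\sum_k (f k : nat) == Lam)%N.
  by apply/eqP; rewrite -[RHS]sum_g; apply: eq_bigr => k _; rewrite ffunE.
by exists (exist _ f f_sum); apply/ffunP => k; rewrite -gE !ffunE /occ /= ffunE.
Qed.

(* x_a d/dx_b on the monomials x^m *)
Definition polar a b : mx := wshift (wroot a b) (fun x => (x b)%:~R).

Lemma shiftable_polar a b : shiftable (wroot a b) (fun x => (x b)%:~R).
Proof. by move=> m; rewrite ffunE intr_eq0 eqz_nat -lt0n; apply: shift_exists. Qed.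

Lemma comm_polar a b c d :
  comm (polar a b) (polar c d) = (b == c)%:R *: polar a d - (d == a)%:R *: polar c b.
Proof.
rewrite /comm !mulmx_wshift; [|exact: shiftable_polar..].
rewrite [wroot a b + _]addrC wshiftB /polar.
rewrite (@scale_wshift _ (wroot c d + wroot a b)); last by move/eqP->; rewrite addrC subrKA.
rewrite (@scale_wshift _ (wroot c d + wroot a b)); last by move/eqP->; rewrite subrKA.
rewrite wshiftB; apply: eq_wshift => m; rewrite !wrootE.
(* the [b == d] terms cancel, since then x_b = x_d *)
by case: (eqVneq b d) => [<-|_]; rewrite !intrD !intrN -!pmulrn ?mulr1n ?mulr0n; ring.
Qed.

Definition gauge x : R := \prod_k Num.sqrt (`|x k|`!%:R).

Lemma gauge_neq0 x : gauge x != 0.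
Proof.
by rewrite gt_eqF // prodr_gt0 // => k _; rewrite sqrtr_gt0 ltr0n fact_gt0.
Qed.

Definition Dgauge : mx := wshift 0 gauge.
Definition Dgauge_inv : mx := wshift 0 (fun x => (gauge x)^-1).

Lemma Dgauge_mulV : Dgauge_inv *m Dgauge = 1%:M.
Proof.
rewrite mulmx_wshift; last exact: shiftable0.
rewrite addr0 -wshift0_1.
by apply: eq_wshift => m; rewrite addr0 mulVf ?gauge_neq0.
Qed.

Definition Egl a b : mx := Dgauge *m polar a b *m Dgauge_inv.

Lemma comm_Egl a b c d :
  comm (Egl a b) (Egl c d) = (b == c)%:R *: Egl a d - (d == a)%:R *: Egl c b.
Proof.
have DK : Dgauge_inv * Dgauge = 1 by rewrite -mulmxE Dgauge_mulV.
rewrite /Egl !mulmxE comm_conj // comm_polar mulrBr mulrBl.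
by rewrite -!mulmxE -!scalemxAr -!scalemxAl.
Qed.

Lemma Egl_wshift a b :
  Egl a b = wshift (wroot a b) (fun x => gauge (x + wroot a b) * (x b)%:~R / gauge x).
Proof.
rewrite /Egl /polar !mulmx_wshift; [|exact: shiftable0|exact: shiftable_polar].
by rewrite add0r addr0; apply: eq_wshift => m; rewrite !addr0.
Qed.

Lemma Nop_Egl k : Nop R Lam k = Egl k k.
Proof.
rewrite Egl_wshift /wroot subrr wshift0_diag; apply/matrixP => p q; rewrite !mxE.
by case: eqP => // _; rewrite addr0 mulrAC divff ?gauge_neq0 // mul1r ffunE -pmulrn.
Qed.

Lemma gauge_shift m m' a b : a != b -> weight m' = weight m + wroot a b ->
  gauge (weight m') * Num.sqrt (occ m b)%:R = gauge (weight m) * Num.sqrt (occ m' a)%:R.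
Proof.
move=> ab sh; have occE k := occ_shift k sh.
have m'a : occ m' a = (occ m a).+1 by have := occE a; rewrite eqxx (negPf ab); lia.
have mb : occ m b = (occ m' b).+1 by have := occE b; rewrite eqxx eq_sym (negPf ab); lia.
rewrite /gauge (bigD1 a) // (bigD1 b) 1?eq_sym //=.
rewrite [in RHS](bigD1 a) // [in RHS](bigD1 b) 1?eq_sym //=.
rewrite (eq_bigr (fun k => Num.sqrt `|weight m k|`!%:R)) => [|k /andP[kb ka]]; last first.
  by rewrite !ffunE; have := occE k; rewrite (negPf ka) (negPf kb) addr0 subr0 => ->.
rewrite !ffunE /= m'a mb !factS !natrM !sqrtrM ?ler0n //.
ring.
Qed.

Lemma Egl_coef m m' a b : a != b -> weight m' = weight m + wroot a b ->
  gauge (weight m') * (occ m b)%:R / gauge (weight m) =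
  Num.sqrt (occ m' a)%:R * Num.sqrt (occ m b)%:R.
Proof.
move=> ab sh; rewrite -[(occ m b)%:R in LHS]sqr_sqrtr ?ler0n // expr2 mulrA.
rewrite (gauge_shift ab sh); field; exact: gauge_neq0.
Qed.

Lemma forall_occ_eq m' (f : 'I_n -> nat) x : (forall k, (f k)%:Z = x k) ->
  [forall k, occ m' k == f k] = (weight m' == x).
Proof.
move=> fx; apply/forallP/eqP => [eqf|xE k]; last by rewrite -eqz_nat fx -xE ffunE.
by apply/ffunP => k; rewrite -fx ffunE (eqP (eqf k)).
Qed.

Lemma ehatp_wshift i :
  ehatp R Lam i = wshift (wroot (ilo i) (ihi i)) (fun x => (0 < x (ihi i))%R%:R).
Proof.
apply/matrixP => p q; rewrite !mxE ffunE ltz_nat.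
set m := enum_val q; case: (posnP (occ m (ihi i))) => [_|hi_pos] /=; first by rewrite if_same.
have fx k : (occ m k + (k == ilo i) - (k == ihi i))%N%:Z
           = (weight m + wroot (ilo i) (ihi i)) k.
  by rewrite wrootE ffunE (natz_occ_shift _ _ hi_pos).
by rewrite (forall_occ_eq _ fx).
Qed.

Lemma ehatm_wshift i :
  ehatm R Lam i = wshift (wroot (ihi i) (ilo i)) (fun x => (0 < x (ilo i))%R%:R).
Proof.
apply/matrixP => p q; rewrite !mxE ffunE ltz_nat.
set m := enum_val q; case: (posnP (occ m (ilo i))) => [_|lo_pos] /=; first by rewrite if_same.
have fx k : (occ m k - (k == ilo i) + (k == ihi i))%N%:Z
           = (weight m + wroot (ihi i) (ilo i)) k.
  by rewrite wrootE ffunE (occ_shift_subDn _ _ lo_pos) (natz_occ_shift _ _ lo_pos).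
by rewrite (forall_occ_eq _ fx).
Qed.

Lemma sqrtop_wshift i :
  sqrtop R Lam i = wshift 0 (fun x => Num.sqrt (((x (ilo i) + 1) * x (ihi i))%:~R)).
Proof.
rewrite wshift0_diag; apply/matrixP => p q; rewrite !mxE !ffunE.
by case: eqP => // _; rewrite -PoszD -PoszM -pmulrn addn1.
Qed.

Lemma Eplus_Egl i : Eplus R Lam i = Egl (ilo i) (ihi i).
Proof.
rewrite /Eplus ehatp_wshift sqrtop_wshift mulmx_wshift; last exact: shiftable0.
rewrite add0r Egl_wshift; apply: eq_wshift => m; rewrite addr0 !ffunE ltz_nat -!pmulrn.
case: (posnP (occ m (ihi i))) => [->|hi_pos] /=; first by rewrite mul0r mulr0 mul0r.
have [m' sh] := shift_exists (ilo i) hi_pos; rewrite -sh (Egl_coef (lo_neq_hi i) sh).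
have := occ_shift (ilo i) sh; rewrite eqxx (negPf (lo_neq_hi i)) => m'lo.
by rewrite mul1r -sqrtrM ?ler0n // -natrM; congr (Num.sqrt (_ * _)%:R); lia.
Qed.

Lemma Eminus_Egl i : Eminus R Lam i = Egl (ihi i) (ilo i).
Proof.
rewrite /Eminus sqrtop_wshift ehatm_wshift mulmx_wshift; last first.
  move=> m; rewrite ffunE ltz_nat; case: posnP => [_|lo_pos _]; last exact: shift_exists.
  by rewrite mulr0n eqxx.
rewrite addr0 Egl_wshift; apply: eq_wshift => m.
have hi_lo : (ihi i == ilo i) = false by rewrite eq_sym (negPf (lo_neq_hi i)).
rewrite !wrootE eqxx hi_lo (negPf (lo_neq_hi i)) !ffunE ltz_nat -!pmulrn.
case: (posnP (occ m (ilo i))) => [->|lo_pos] /=; first by rewrite !mulr0 mul0r.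
have [m' sh] := shift_exists (ihi i) lo_pos; rewrite -sh (Egl_coef _ sh) ?hi_lo //.
have := occ_shift (ihi i) sh; rewrite eqxx hi_lo => m'hi.
by rewrite mulr1 -sqrtrM ?ler0n // -natrM pmulrn; congr (Num.sqrt _%:~R); lia.
Qed.

Lemma comm_Egl_diag k a b :
  comm (Egl k k) (Egl a b) = ((k == a)%:R - (k == b)%:R) *: Egl a b.
Proof.
rewrite comm_Egl scalerBl [b == k]eq_sym.
by congr (_ - _); case: eqP => [->|_]; rewrite ?scale0r.
Qed.

Lemma serre_Egl a b c d : a != b -> c != d -> ~~ ((b == c) && (a == d)) ->
  serre ((b == c) + (a == d)).+1 (Egl a b) (Egl c d) = 0.
Proof.
move=> ab cd; rewrite eq_sym in ab.
case: (eqVneq b c) => [<-|bc]; case: (eqVneq a d) => [<-|ad] //= _.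
- rewrite serre2 comm_Egl eqxx eq_sym (negPf ad) scale1r scale0r subr0.
  by rewrite comm_Egl (negPf ab) eq_sym (negPf ad) !scale0r subrr.
- rewrite serre2 comm_Egl eqxx (negPf bc) scale1r scale0r sub0r commNr.
  by rewrite comm_Egl (negPf bc) (negPf ab) !scale0r subrr oppr0.
- by rewrite serre1 comm_Egl (negPf bc) eq_sym (negPf ad) !scale0r subrr.
Qed.

End WeightedShifts.

Theorem mainTheorem1 (R : realType) (n Lam : nat) (hn : (2 <= n)%N) (hLam : (0 < Lam)%N) :
  [/\ (forall i j : 'I_n.-1,
         comm (Hop R Lam i) (Eplus R Lam j) = (cartan j i)%:~R *: Eplus R Lam j),
      (forall i j : 'I_n.-1,
         comm (Hop R Lam i) (Eminus R Lam j) = - ((cartan j i)%:~R *: Eminus R Lam j)),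
      (forall i j : 'I_n.-1,
         comm (Eplus R Lam i) (Eminus R Lam j) = (i == j)%:R *: Hop R Lam i),
      (forall i j : 'I_n.-1, comm (Hop R Lam i) (Hop R Lam j) = 0) &
      ((forall i j : 'I_n.-1, i != j ->
         serre `|1 - cartan i j|%N (Eplus R Lam i) (Eplus R Lam j) = 0)
      /\ (forall i j : 'I_n.-1, i != j ->
         serre `|1 - cartan i j|%N (Eminus R Lam i) (Eminus R Lam j) = 0))].
Proof.
split.
- move=> i j; rewrite /Hop !Nop_Egl Eplus_Egl commBl !comm_Egl_diag.
  by rewrite -scalerBl intr_cartan.
- move=> i j; rewrite /Hop !Nop_Egl Eminus_Egl commBl !comm_Egl_diag.
  by rewrite -scalerBl -scaleNr intr_cartan; congr (_ *: _); ring.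
- move=> i j; rewrite Eplus_Egl Eminus_Egl comm_Egl /Hop !Nop_Egl eq_ihi eq_ilo.
  by case: (eqVneq i j) => [<-|_]; rewrite ?scale1r // !scale0r subrr.
- move=> i j; rewrite /Hop !Nop_Egl !commBl !commBr !comm_Egl_diag.
  by rewrite !(subrr, scale0r).
split=> i j ij; rewrite abs_cartan //.
- rewrite [Eplus _ _ i]Eplus_Egl [Eplus _ _ j]Eplus_Egl.
  by rewrite serre_Egl ?lo_neq_hi ?adjacent_nand.
- rewrite addnC [Eminus _ _ i]Eminus_Egl [Eminus _ _ j]Eminus_Egl.
  by apply: serre_Egl; rewrite 1?andbC ?adjacent_nand // eq_sym lo_neq_hi.
Qed.
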